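(* Let $M\in\mathbb{N}^{k\times l}$ have row sums $\alpha$ and column sums $\beta$, and let $(T,T')$ be semistandard tableaux of the same shape with contents $\alpha,\beta$. Suppose there is a rational function $f\in\mathbb{Q}(x)$ such that $p_M(T,T')=f(q)$ whenever $1/q$ is a prime power (with $\Bbbk=\mathbb{F}_{1/q}$). Then $f\in\mathbb{Q}[x]$.
   Context: Over $\Bbbk=\mathbb{F}_{1/q}$: $\mathrm{Fl}_\alpha$ is the set of chains $0=F_0\subseteq\cdots\subseteq F_k=\Bbbk^n$ with $\dim F_i=\alpha_1+\cdots+\alpha_i$; $(F,F')\in\mathrm{Fl}_\alpha\times\mathrm{Fl}_\beta$ has relative position $M$ if $\dim(F_i\cap F'_j)=\sum_{i'\le i,j'\le j}M_{i',j'}$; $N$ strictly compatible with $F$ means $N(F_i)\subseteq F_{i-1}$, and then $\mathrm{JF}(N;F)$ is the semistandard tableau whose entries $\le i$ form the shape $\mathrm{JF}(N|_{F_i})$, where $\mathrm{JF}(N)$ is the partition with $\lambda_1+\cdots+\lambda_i=\dim\ker N^i$. $\Omega_M$ is the set of triples $(F,F',N)$ with $F\in\mathrm{Fl}_\alpha$, $F'\in\mathrm{Fl}_\beta$ of relative position $M$ and $N$ strictly compatible with both; $\Omega_M^{T,T'}$ the subset with $\mathrm{JF}(N;F)=T$, $\mathrm{JF}(N;F')=T'$; $p_M(T,T')=|\Omega_M^{T,T'}|/|\Omega_M|$. *)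

From HB Require Import structures.
From mathcomp Require Import all_boot all_order all_algebra all_field.
From mathcomp Require Import boolp.
Set Implicit Arguments. Unset Strict Implicit. Unset Printing Implicit Defensive.
Import GRing.Theory.

(* A tableau is the list of its rows (row 0 = top row); entries are 1..k. *)
Definition tableau := seq (seq nat).

Definition trow (T : tableau) (r : nat) : seq nat := nth [::] T r.

Definition semistandard (k : nat) (T : tableau) : Prop :=
  [/\ (forall r, r < size T -> 0 < size (trow T r)),
      (forall r, size (trow T r.+1) <= size (trow T r)),
      (forall x, x \in flatten T -> (0 < x) && (x <= k)),
      (forall r, sorted leq (trow T r)) &
      (forall r c, c < size (trow T r.+1) ->
                   nth 0 (trow T r) c < nth 0 (trow T r.+1) c)].

Definition tshape (T : tableau) : seq nat := map size T.

(* content a : 'I_k -> nat  (a i = number of entries equal to i+1) *)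
Definition has_content (k : nat) (T : tableau) (a : 'I_k -> nat) : Prop :=
  forall i : 'I_k, count_mem i.+1 (flatten T) = a i.

Definition rowcnt (T : tableau) (i r : nat) : nat :=
  count (fun x => x <= i) (trow T r).

Section LinAlg.
Variables (F : finFieldType) (n : nat).
Local Open Scope nat_scope.

(* subspaces of F^n (row vectors) are represented canonically by square
   matrices A with <<A>> = A; a flag of type a is a function on 0..k *)
Definition is_flag (k : nat) (a : 'I_k -> nat) (Fl : {ffun 'I_k.+1 -> 'M[F]_n})
  : bool :=
  [forall i : 'I_k.+1, (<<Fl i>>%MS == Fl i)
       && (\rank (Fl i) == \sum_(j < k | j < i) a j)]
  && [forall i : 'I_k, (Fl (widen_ord (leqnSn k) i) <= Fl (lift ord0 i))%MS].

Definition relpos (k l : nat) (M : 'M[nat]_(k, l))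
  (Fl : {ffun 'I_k.+1 -> 'M[F]_n}) (Fl' : {ffun 'I_l.+1 -> 'M[F]_n}) : bool :=
  [forall i : 'I_k.+1, forall j : 'I_l.+1,
     \rank (Fl i :&: Fl' j)%MS
       == \sum_(i' < k | i' < i) \sum_(j' < l | j' < j) M i' j'].

(* N strictly compatible with the flag: N(F_i) subset F_{i-1};
   N acts on row vectors by v |-> v *m N *)
Definition strict_compat (k : nat) (Fl : {ffun 'I_k.+1 -> 'M[F]_n})
  (N : 'M[F]_n) : bool :=
  [forall i : 'I_k, ((Fl (lift ord0 i) *m N)%R <= Fl (widen_ord (leqnSn k) i))%MS].

(* dim ker (N|_V)^j = dim (V cap ker N^j) *)
Definition kerdim (N V : 'M[F]_n) (j : nat) : nat :=
  \rank (V :&: kermx (N ^+ j)%R)%MS.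

(* JF(N|_V) as a partition: lambda_1 + ... + lambda_j = dim ker (N|_V)^j,
   i.e. lambda_{r+1} = kerdim (r+1) - kerdim r *)
Definition jfpart (N V : 'M[F]_n) (r : nat) : nat :=
  kerdim N V r.+1 - kerdim N V r.

(* JF(N;Fl) = T : for each i, the entries <= i of T form the shape JF(N|_{F_i}) *)
Definition JF_eq (k : nat) (N : 'M[F]_n) (Fl : {ffun 'I_k.+1 -> 'M[F]_n})
  (T : tableau) : Prop :=
  forall (i : 'I_k.+1) (r : nat), rowcnt T i r = jfpart N (Fl i) r.

End LinAlg.

Definition triple (F : finFieldType) (n k l : nat) :=
  ({ffun 'I_k.+1 -> 'M[F]_n} * {ffun 'I_l.+1 -> 'M[F]_n} * 'M[F]_n)%type.

Definition Omega (F : finFieldType) (k l : nat) (M : 'M[nat]_(k, l))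
  (a : 'I_k -> nat) (b : 'I_l -> nat) : {set triple F (\sum_(i < k) a i)%N k l} :=
  [set x | [&& is_flag a x.1.1, is_flag b x.1.2, relpos M x.1.1 x.1.2,
              strict_compat x.1.1 x.2 & strict_compat x.1.2 x.2]].

Definition OmegaTT (F : finFieldType) (k l : nat) (M : 'M[nat]_(k, l))
  (a : 'I_k -> nat) (b : 'I_l -> nat) (T T' : tableau) :
  {set triple F (\sum_(i < k) a i)%N k l} :=
  [set x in Omega F M a b | `[< JF_eq x.2 x.1.1 T /\ JF_eq x.2 x.1.2 T' >] ].

Definition pM (F : finFieldType) (k l : nat) (M : 'M[nat]_(k, l))
  (a : 'I_k -> nat) (b : 'I_l -> nat) (T T' : tableau) : rat :=
  ((#|OmegaTT F M a b T T'|)%:R / (#|Omega F M a b|)%:R)%R.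

(* Over a field with Q elements, GL_n acts transitively on the pairs of flags
   in relative position M: a basis adapted to the cells F_{i+1} ∩ F'_{j+1}
   modulo smaller intersections moves one pair onto any other.  Conjugating by
   such a g carries the nilpotents strictly compatible with one pair, and their
   Jordan types, to those of the other, so p_M(T,T') = |W|/|V| for the fibres
   W ⊆ V over a single flag pair.  As V is an additive subgroup of n×n
   matrices, Q^(n²)·p_M(T,T') is an integer in [0, Q^(n²)].  Hence, writing
   f = P/R, the rational function y^(n²)·f(1/y) is integral at infinitely many
   integers y (the primes), so it is a polynomial A of degree at most n², and
   f(x) = x^(n²)·A(1/x) is a polynomial. *)

From HB Require Import structures.
From mathcomp Require Import all_boot all_order all_algebra all_field.
From mathcomp Require Import all_fingroup boolp polyrcf ring zify.
Set Implicit Arguments.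
Unset Strict Implicit.
Unset Printing Implicit Defensive.

Import Order.TTheory GRing.Theory Num.Theory.
Local Open Scope ring_scope.

Section Flags.
Variables (F : fieldType) (n m : nat).
Implicit Types Fl : {ffun 'I_m.+1 -> 'M[F]_n}.

Definition nested Fl :=
  forall i : 'I_m, (Fl (widen_ord (leqnSn m) i) <= Fl (lift ord0 i))%MS.

Definition flagn Fl (i : nat) : 'M[F]_n := Fl (inord (minn i m)).

Lemma flagn_ord Fl (i : 'I_m.+1) : flagn Fl i = Fl i.
Proof. by rewrite /flagn (minn_idPl _) ?inord_val // -ltnS. Qed.

Lemma flagn_stable Fl i : (m <= i)%N -> flagn Fl i.+1 = flagn Fl i.
Proof. by move=> le_mi; rewrite /flagn !(minn_idPr _) // ltnW. Qed.

Lemma flagnS Fl : nested Fl -> forall i, (flagn Fl i <= flagn Fl i.+1)%MS.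
Proof.
move=> nestedFl i; have [lt_im | le_mi] := ltnP i m; last by rewrite flagn_stable.
have := nestedFl (Ordinal lt_im); rewrite /flagn (minn_idPl (ltnW lt_im)).
rewrite (minn_idPl lt_im); congr (Fl _ <= Fl _)%MS; apply/val_inj.
  by rewrite /= inordK // ltnS ltnW.
by rewrite /= inordK.
Qed.

Lemma flagn_mono Fl : nested Fl -> {homo flagn Fl : i j / (i <= j)%N >-> (i <= j)%MS}.
Proof.
move=> nestedFl i j le_ij; rewrite -(subnKC le_ij).
elim: (j - i)%N => [|d IHd]; first by rewrite addn0.
by rewrite addnS (submx_trans IHd) ?flagnS.
Qed.

End Flags.

Definition msum k l (M : 'M[nat]_(k, l)) (i j : nat) : nat :=
  \sum_(i' < k | (i' < i)%N) \sum_(j' < l | (j' < j)%N) M i' j'.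

Lemma big_ord_ltS p (f : 'I_p -> nat) (i : 'I_p) :
  (\sum_(i' < p | (i' < i.+1)%N) f i' = \sum_(i' < p | (i' < i)%N) f i' + f i)%N.
Proof.
rewrite (bigD1 i) //= addnC; congr (_ + _); apply: eq_bigl => i'.
by rewrite ltnS ltn_neqAle andbC.
Qed.

Lemma msum_rect k l (M : 'M[nat]_(k, l)) (i : 'I_k) (j : 'I_l) :
  (msum M i.+1 j.+1 + msum M i j = msum M i j.+1 + msum M i.+1 j + M i j)%N.
Proof. by rewrite /msum !big_ord_ltS; lia. Qed.

Lemma msum_all k l (M : 'M[nat]_(k, l)) :
  msum M k l = (\sum_(i < k) \sum_(j < l) M i j)%N.
Proof.
by apply: eq_big => [i|i _]; rewrite ?ltn_ord //; apply: eq_bigl => j; rewrite ltn_ord.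
Qed.

Section Cells.
Variables (F : fieldType) (n k l : nat) (M : 'M[nat]_(k, l)).
Variables (Fl : {ffun 'I_k.+1 -> 'M[F]_n}) (Fl' : {ffun 'I_l.+1 -> 'M[F]_n}).
Hypotheses (nestedFl : nested Fl) (nestedFl' : nested Fl').
Hypothesis rank_cap : forall i j, \rank (flagn Fl i :&: flagn Fl' j) = msum M i j.

Local Notation cap i j := (flagn Fl i :&: flagn Fl' j)%MS.

Lemma cap_mono i1 i2 j1 j2 : (i1 <= i2)%N -> (j1 <= j2)%N -> (cap i1 j1 <= cap i2 j2)%MS.
Proof. by move=> le_i le_j; rewrite capmxS ?flagn_mono. Qed.

Definition cell i j : 'M[F]_n := (cap i.+1 j.+1 :\: (cap i j.+1 + cap i.+1 j))%MS.

Lemma rank_cell (i : 'I_k) (j : 'I_l) : \rank (cell i j) = M i j.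
Proof.
have sub_cap : (cap i j.+1 + cap i.+1 j <= cap i.+1 j.+1)%MS.
  by rewrite addsmx_sub !cap_mono.
have capI : (cap i j.+1 :&: cap i.+1 j :=: cap i j)%MS.
  apply/eqmxP/andP; split; last by rewrite sub_capmx !cap_mono.
  rewrite sub_capmx (submx_trans (capmxSl _ _) (capmxSl _ _)) //=.
  exact: submx_trans (capmxSr _ _) (capmxSr _ _).
have := mxrank_cap_compl (cap i.+1 j.+1) (cap i j.+1 + cap i.+1 j)%MS.
have := mxrank_sum_cap (cap i j.+1) (cap i.+1 j).
rewrite capI (elimT capmx_idPr sub_cap) -/(cell i j) !rank_cap.
by have := msum_rect M i j; lia.
Qed.

Definition cellsum i j : 'M[F]_n :=
  (\sum_(i' < k | (i' < i)%N) \sum_(j' < l | (j' < j)%N) cell i' j')%MS.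

Lemma cellsum_mono i1 i2 j1 j2 :
  (i1 <= i2)%N -> (j1 <= j2)%N -> (cellsum i1 j1 <= cellsum i2 j2)%MS.
Proof.
move=> le_i le_j; apply/sumsmx_subP => i' lt_i1; apply/sumsmx_subP => j' lt_j1.
apply: (sumsmx_sup i'); first exact: leq_trans le_i.
by apply: (sumsmx_sup j'); first exact: leq_trans le_j.
Qed.

Lemma cap_msum0 i j : msum M i j = 0%N -> cap i j = 0.
Proof. by move=> msum0; apply/eqP; rewrite -mxrank_eq0 rank_cap msum0. Qed.

Lemma cap_sub_cellsum i j : (cap i j <= cellsum i j)%MS.
Proof.
elim: i j => [|i IHi] j; first by rewrite cap_msum0 ?sub0mx // /msum big_pred0.
elim: j => [|j IHj].
  by rewrite cap_msum0 ?sub0mx // /msum big1 // => i' _; rewrite big_pred0.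
have [le_ki | lt_ik] := leqP k i.
  by rewrite (flagn_stable _ le_ki) (submx_trans (IHi _)) ?cellsum_mono.
have [le_lj | lt_jl] := leqP l j.
  by rewrite (flagn_stable _ le_lj) (submx_trans IHj) ?cellsum_mono.
rewrite -(addsmx_diff_cap_eq (cap i.+1 j.+1) (cap i j.+1 + cap i.+1 j)%MS) addsmx_sub.
apply/andP; split.
  by apply: (sumsmx_sup (Ordinal lt_ik)) => //; apply: (sumsmx_sup (Ordinal lt_jl)).
apply: submx_trans (capmxSr _ _) _; rewrite addsmx_sub.
by rewrite (submx_trans (IHi _)) ?(submx_trans IHj) ?cellsum_mono.
Qed.

Lemma cellsum_cap i j : (cellsum i j :=: cap i j)%MS.
Proof.
apply/eqmxP; rewrite cap_sub_cellsum andbT.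
apply/sumsmx_subP => i' lt_i'i; apply/sumsmx_subP => j' lt_j'j.
by rewrite (submx_trans (diffmxSl _ _)) ?cap_mono.
Qed.

Hypothesis sumM : (\sum_(i < k) \sum_(j < l) M i j)%N = n.

Lemma cap_full : row_full (cap k l).
Proof. by rewrite /row_full rank_cap msum_all sumM. Qed.

Lemma flag_cellsum (i : 'I_k.+1) : (Fl i :=: cellsum i l)%MS.
Proof.
have full' : row_full (flagn Fl' l).
  by rewrite -sub1mx (submx_trans _ (capmxSr (flagn Fl k) _)) // sub1mx cap_full.
apply: eqmx_sym; apply: eqmx_trans (cellsum_cap i l) _.
by rewrite -(flagn_ord Fl i); apply: capmxT.
Qed.

Lemma flag'_cellsum (j : 'I_l.+1) : (Fl' j :=: cellsum k j)%MS.
Proof.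
have full : row_full (flagn Fl k).
  by rewrite -sub1mx (submx_trans _ (capmxSl _ (flagn Fl' l))) // sub1mx cap_full.
apply: eqmx_sym; apply: eqmx_trans (cellsum_cap k j) _.
by rewrite -(flagn_ord Fl' j); apply: capTmx.
Qed.

Definition cell_block (i : 'I_k) (j : 'I_l) : 'M[F]_(M i j, n) :=
  castmx (rank_cell i j, erefl n) (row_base (cell i j)).

Lemma eqmx_cell_block i j : (cell_block i j :=: cell i j)%MS.
Proof. exact: eqmx_trans (eqmx_cast _ _) (eq_row_base _). Qed.

Definition cell_basis : 'M[F]_(\sum_(i < k) \sum_(j < l) M i j, n) :=
  \mxcol_(i < k) \mxcol_(j < l) cell_block i j.

Lemma eqmx_cell_basis : (cell_basis :=: 1%:M)%MS.
Proof.
apply: eqmx_trans (_ : (cellsum k l :=: 1%:M)%MS); last first.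
  by apply/eqmxP; rewrite submx1 sub1mx /row_full cellsum_cap; exact: cap_full.
have -> : cellsum k l = (\sum_(i < k) \sum_(j < l) cell i j)%MS.
  by apply: eq_big => [i|i _]; rewrite ?ltn_ord //; apply: eq_bigl => j; rewrite ltn_ord.
apply: eqmx_trans (eqmx_col _) _; apply: eqmx_sums => i _.
apply: eqmx_trans (genmxE _) _; apply: eqmx_trans (eqmx_col _) _.
apply: eqmx_sums => j _; exact: eqmx_trans (genmxE _) (eqmx_cell_block _ _).
Qed.

Lemma cell_basis_free : row_free cell_basis.
Proof. by rewrite /row_free eqmx_cell_basis mxrank1 sumM. Qed.

Lemma cell_basis_full : row_full cell_basis.
Proof. by rewrite /row_full eqmx_cell_basis mxrank1. Qed.

End Cells.

Lemma flag_pairs_conjugate (F : fieldType) n k l (M : 'M[nat]_(k, l))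
    (Fl1 Fl2 : {ffun 'I_k.+1 -> 'M[F]_n}) (Fl1' Fl2' : {ffun 'I_l.+1 -> 'M[F]_n}) :
  nested Fl1 -> nested Fl1' -> nested Fl2 -> nested Fl2' ->
  (forall i j, \rank (flagn Fl1 i :&: flagn Fl1' j) = msum M i j) ->
  (forall i j, \rank (flagn Fl2 i :&: flagn Fl2' j) = msum M i j) ->
  (\sum_(i < k) \sum_(j < l) M i j)%N = n ->
  exists2 g : 'M[F]_n, g \in unitmx &
    (forall i, (Fl1 i *m g :=: Fl2 i)%MS) /\ (forall j, (Fl1' j *m g :=: Fl2' j)%MS).
Proof.
move=> n1 n1' n2 n2' r1 r2 sumM.
pose E1 := cell_basis n1 n1' r1; pose E2 := cell_basis n2 n2' r2.
pose g := pinvmx E1 *m E2.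
have E1g : E1 *m g = E2 by rewrite mulmxA mulmxVp ?mul1mx // cell_basis_free.
have cellg (i : 'I_k) (j : 'I_l) : (cell Fl1 Fl1' i j *m g :=: cell Fl2 Fl2' i j)%MS.
  have block_g : cell_block n1 n1' r1 i j *m g = cell_block n2 n2' r2 i j.
    move/(congr1 (fun A => submxcol A i)): E1g; rewrite mxcol_mul !mxcolK mxcol_mul.
    by move/(congr1 (fun A => submxcol A j)); rewrite !mxcolK.
  apply: eqmx_trans (eqmxMr g (eqmx_sym (eqmx_cell_block n1 n1' r1 i j))) _.
  by rewrite block_g; apply: eqmx_cell_block.
have cellsumg i j : (cellsum Fl1 Fl1' i j *m g :=: cellsum Fl2 Fl2' i j)%MS.
  apply: eqmx_trans (sumsmxMr _ _ _) _; apply: eqmx_sums => i' _.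
  by apply: eqmx_trans (sumsmxMr _ _ _) _; apply: eqmx_sums => j' _.
exists g; last split.
- rewrite -row_full_unit -sub1mx (submx_trans _ (submxMl E1 _)) // E1g sub1mx.
  exact: cell_basis_full.
- move=> i; apply: eqmx_trans (eqmxMr _ (flag_cellsum n1 n1' r1 sumM i)) _.
  by apply: eqmx_trans (cellsumg _ _) (eqmx_sym (flag_cellsum n2 n2' r2 sumM i)).
- move=> j; apply: eqmx_trans (eqmxMr _ (flag'_cellsum n1 n1' r1 sumM j)) _.
  by apply: eqmx_trans (cellsumg _ _) (eqmx_sym (flag'_cellsum n2 n2' r2 sumM j)).
Qed.

Section FiniteFlags.
Variables (F : finFieldType) (n : nat).

Lemma nested_flag m (c : 'I_m -> nat) (Fl : {ffun 'I_m.+1 -> 'M[F]_n}) :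
  is_flag c Fl -> nested Fl.
Proof. by case/andP=> _ /forallP. Qed.

Lemma relpos_rank_cap k l (M : 'M[nat]_(k, l))
    (Fl : {ffun 'I_k.+1 -> 'M[F]_n}) (Fl' : {ffun 'I_l.+1 -> 'M[F]_n}) :
  relpos M Fl Fl' -> forall i j, \rank (flagn Fl i :&: flagn Fl' j) = msum M i j.
Proof.
move=> /forallP relFl i j.
have /forallP/(_ (inord (minn j l)))/eqP -> := relFl (inord (minn i k)).
rewrite /msum; apply: eq_big => [i'|i' _].
  by rewrite inordK; [apply/idP/idP; have := ltn_ord i'; lia | lia].
by apply: eq_bigl => j'; rewrite inordK; [apply/idP/idP; have := ltn_ord j'; lia | lia].
Qed.

Lemma strict_compat0 m (Fl : {ffun 'I_m.+1 -> 'M[F]_n}) : strict_compat Fl 0.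
Proof. by apply/forallP => i; rewrite mulmx0 sub0mx. Qed.

Lemma strict_compatD m (Fl : {ffun 'I_m.+1 -> 'M[F]_n}) N1 N2 :
  strict_compat Fl N1 -> strict_compat Fl N2 -> strict_compat Fl (N1 + N2).
Proof.
move=> /forallP compat1 /forallP compat2; apply/forallP => i.
by rewrite mulmxDr addmx_sub ?compat1 ?compat2.
Qed.

Lemma kerdimE (N V : 'M[F]_n) j : kerdim N V j = (\rank V - \rank (V *m N ^+ j))%N.
Proof. by rewrite /kerdim -(mxrank_mul_ker V (N ^+ j)) addKn. Qed.

End FiniteFlags.

Section Conjugation.
Variables (F : finFieldType) (n : nat) (g : 'M[F]_n).
Hypothesis g_unit : g \in unitmx.
Local Notation conj := (conjmx (invmx g)).

Lemma conj_inj : injective conj.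
Proof. by move=> N1 N2 /(congr1 (conjmx g)); rewrite !conjmxVK. Qed.

Lemma conj_exp (N : 'M[F]_n) j : conj N ^+ j = conj (N ^+ j).
Proof.
rewrite !conjVmx //; elim: j => [|j IHj]; first by rewrite !expr0 mulmx1 mulVmx.
by rewrite !exprS IHj -!mulmxE !mulmxA mulmxK.
Qed.

Lemma kerdim_conj (N V1 V2 : 'M[F]_n) j :
  (V1 *m g :=: V2)%MS -> kerdim (conj N) V2 j = kerdim N V1 j.
Proof.
move=> eqV; rewrite !kerdimE conj_exp conjVmx // -(eqmxMr _ eqV) -eqV.
have g_free : row_free g by rewrite row_free_unit.
by rewrite !mulmxA mulmxK // !(mxrankMfree _ g_free).
Qed.

Lemma strict_compat_conj m (Fl1 Fl2 : {ffun 'I_m.+1 -> 'M[F]_n}) N :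
  (forall i, (Fl1 i *m g :=: Fl2 i)%MS) -> strict_compat Fl1 N -> strict_compat Fl2 (conj N).
Proof.
move=> eqFl /forallP compatN; apply/forallP => i.
rewrite -(eqmxMr _ (eqFl _)) -(eqFl (widen_ord _ i)) conjVmx //.
by rewrite !mulmxA mulmxK // submxMr.
Qed.

Lemma JF_eq_conj m (Fl1 Fl2 : {ffun 'I_m.+1 -> 'M[F]_n}) N T :
  (forall i, (Fl1 i *m g :=: Fl2 i)%MS) -> JF_eq N Fl1 T -> JF_eq (conj N) Fl2 T.
Proof. by move=> eqFl JFN i r; rewrite JFN /jfpart !(kerdim_conj _ _ (eqFl i)). Qed.

End Conjugation.

Lemma card_fibered (X Y : finType) (A : {set X * Y}) (S : {set X}) (Q : X -> pred Y) :
  (forall x, (x \in A) = (x.1 \in S) && Q x.1 x.2) ->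
  #|A| = (\sum_(p in S) #|[set y | Q p y]|)%N.
Proof.
move=> memA; rewrite -sum1_card (eq_bigl (fun x => (x.1 \in S) && Q x.1 x.2)) //.
rewrite -(pair_big_dep (mem S) Q (fun _ _ => 1%N)).
by apply: eq_bigr => p _; rewrite -sum1_card; apply: eq_bigl => y; rewrite inE.
Qed.

Lemma card_addr_closed_dvd (V : finZmodType) (A : {set V}) :
  0 \in A -> {in A &, forall x y, x + y \in A} -> (#|A| %| #|V|)%N.
Proof.
move=> A0 AD; have gA : group_set A by apply/group_setP; split; [exact: A0 | exact: AD].
by have := cardSg (subsetT (Group gA)); rewrite cardsT.
Qed.

Section Counting.
Variables (F : finFieldType) (k l : nat) (M : 'M[nat]_(k, l)).
Variables (a : 'I_k -> nat) (b : 'I_l -> nat) (T T' : tableau).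
Local Notation n := (\sum_(i < k) a i)%N.
Local Notation flag_pair := ({ffun 'I_k.+1 -> 'M[F]_n} * {ffun 'I_l.+1 -> 'M[F]_n})%type.

Definition flag_pairs : {set flag_pair} :=
  [set p | [&& is_flag a p.1, is_flag b p.2 & relpos M p.1 p.2]].

Definition compat (p : flag_pair) : {set 'M[F]_n} :=
  [set N | strict_compat p.1 N && strict_compat p.2 N].

Definition compatJF (p : flag_pair) : {set 'M[F]_n} :=
  [set N in compat p | `[< JF_eq N p.1 T /\ JF_eq N p.2 T' >]].

Lemma card_Omega : #|Omega F M a b| = (\sum_(p in flag_pairs) #|compat p|)%N.
Proof. by apply: card_fibered => x; rewrite !inE -!andbA. Qed.

Lemma card_OmegaTT : #|OmegaTT F M a b T T'| = (\sum_(p in flag_pairs) #|compatJF p|)%N.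
Proof. by apply: card_fibered => x; rewrite !inE -!andbA. Qed.

Lemma card_compat_dvd p : (#|compat p| %| #|F| ^ (n * n))%N.
Proof.
rewrite -card_mx; apply: card_addr_closed_dvd; first by rewrite inE !strict_compat0.
by move=> N1 N2; rewrite !inE => /andP[c1 c2] /andP[d1 d2]; rewrite !strict_compatD.
Qed.

Lemma card_compat_gt0 p : (0 < #|compat p|)%N.
Proof. by apply/card_gt0P; exists 0; rewrite inE !strict_compat0. Qed.

Lemma card_compatJF_le p : (#|compatJF p| <= #|compat p|)%N.
Proof. by apply/subset_leq_card/subsetP => N; rewrite inE => /andP[]. Qed.

Hypothesis rowsumM : forall i, a i = (\sum_(j < l) M i j)%N.

Lemma card_compat_le p1 p2 : p1 \in flag_pairs -> p2 \in flag_pairs ->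
  (#|compat p1| <= #|compat p2|)%N && (#|compatJF p1| <= #|compatJF p2|)%N.
Proof.
rewrite !inE => /and3P[flag1 flag1' rel1] /and3P[flag2 flag2' rel2].
have sumM : (\sum_(i < k) \sum_(j < l) M i j)%N = n by apply: eq_bigr => i _; rewrite rowsumM.
have [g g_unit [eqFl eqFl']] := flag_pairs_conjugate (nested_flag flag1) (nested_flag flag1')
  (nested_flag flag2) (nested_flag flag2') (relpos_rank_cap rel1) (relpos_rank_cap rel2) sumM.
have conj_compat N : N \in compat p1 -> conjmx (invmx g) N \in compat p2.
  rewrite !inE => /andP[c1 c1'].
  by rewrite (strict_compat_conj g_unit eqFl c1) (strict_compat_conj g_unit eqFl' c1').
rewrite -(card_imset (compat p1) (conj_inj g_unit)).
rewrite -(card_imset (compatJF p1) (conj_inj g_unit)); apply/andP; split;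
  apply/subset_leq_card/subsetP => _ /imsetP[N compN ->]; first exact: conj_compat.
move: compN; rewrite inE => /andP[compN /asboolP[JF1 JF1']].
by rewrite inE conj_compat //; apply/asboolP; split; apply: JF_eq_conj.
Qed.

Lemma pM_card_ratio p : p \in flag_pairs ->
  pM F M a b T T' = (#|compatJF p|%:R / #|compat p|%:R)%R.
Proof.
move=> p_in; have eq_card p' : p' \in flag_pairs ->
    #|compat p'| = #|compat p| /\ #|compatJF p'| = #|compatJF p|.
  move=> p'_in; have /andP[le1 le2] := card_compat_le p'_in p_in.
  have /andP[ge1 ge2] := card_compat_le p_in p'_in.
  by split; apply/eqP; rewrite eqn_leq ?le1 ?le2.
have pairs_gt0 : (0 < #|flag_pairs|)%N by apply/card_gt0P; exists p.
rewrite /pM card_Omega card_OmegaTT.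
rewrite (eq_bigr (fun=> #|compat p|) (fun p' p'_in => (eq_card p' p'_in).1)).
rewrite (eq_bigr (fun=> #|compatJF p|) (fun p' p'_in => (eq_card p' p'_in).2)).
by rewrite !sum_nat_const !natrM invfM mulrACA mulfV ?mul1r // pnatr_eq0 -lt0n.
Qed.

Lemma pM_scaled_nat : exists2 N : nat, (N <= #|F| ^ (n * n))%N &
  (pM F M a b T T' * #|F|%:R ^+ (n * n) = N%:R)%R.
Proof.
have [no_pairs | [p p_in]] := set_0Vmem flag_pairs.
  by exists 0%N => //; rewrite /pM card_OmegaTT no_pairs big_set0 !mul0r.
have [c defQ] := dvdnP (card_compat_dvd p).
exists (#|compatJF p| * c)%N; first by rewrite defQ mulnC leq_mul2l card_compatJF_le orbT.
rewrite (pM_card_ratio p_in) -natrX defQ !natrM mulrA mulrAC divfK // pnatr_eq0 -lt0n.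
exact: card_compat_gt0.
Qed.

End Counting.

Definition frequently (P : nat -> Prop) := forall m, exists2 Q, (m < Q)%N & P Q.

Lemma frequentlyS (P P' : nat -> Prop) :
  (forall Q, (0 < Q)%N -> P Q -> P' Q) -> frequently P -> frequently P'.
Proof.
by move=> PP' freqP m; have [Q lt_mQ PQ] := freqP m; exists Q => //; apply: PP' PQ; lia.
Qed.

Section RealPoly.
Variable R : realFieldType.
Implicit Types p s t : {poly R}.

Lemma poly_norm_lt_eventually s t : (size s < size t)%N ->
  exists B, forall x, B <= x -> `|s.[x]| < `|t.[x]|.
Proof.
move=> lt_st; have t_neq0 : t != 0 by rewrite -size_poly_gt0 (leq_ltn_trans _ lt_st).
have lt_size : (size (- (s * s))%R < size (t * t)%R)%N.
  rewrite size_polyN (size_mul t_neq0 t_neq0) (leq_ltn_trans (size_polyMleq _ _)) //.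
  by move: lt_st t_neq0; rewrite -size_poly_gt0; move: (size s) (size t) => x y; lia.
have lc_gt0 : 0 < lead_coef (t * t - s * s).
  by rewrite lead_coefDl // lead_coefM -expr2 lt0r sqr_ge0 sqrf_eq0 lead_coef_eq0 t_neq0.
have [B hB] := poly_pinfty_gt_lc lc_gt0; exists B => x /hB.
rewrite !hornerE => /(lt_le_trans lc_gt0); rewrite subr_gt0 -!expr2 => lt_sq.
by rewrite -(ltr_pXn2r (n := 2)) // ?qualifE //= -!normrX !ger0_norm ?sqr_ge0.
Qed.

Lemma poly_eq_eventually p q (B : R) :
  (forall x, B <= x -> p.[x] = q.[x]) -> p = q.
Proof.
move=> eq_pq; apply/eqP; rewrite -subr_eq0; apply: contraT => pq_neq0.
have [|B' hB'] := @poly_norm_lt_eventually 0 (p - q).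
  by rewrite size_poly0 size_poly_gt0.
have := hB' (Num.max B B'); rewrite le_max lexx orbT => /(_ isT).
by rewrite !hornerE eq_pq ?le_max ?lexx // subrr normr0 ltxx.
Qed.

End RealPoly.

Lemma nat_ge_eventually (R : archiRealFieldType) (B : R) :
  exists m, forall Q : nat, (m < Q)%N -> B <= Q%:R.
Proof.
exists (Num.bound `|B|) => Q lt_mQ; apply: (le_trans (ler_norm B)).
by apply/ltW/(lt_le_trans (archi_boundP (normr_ge0 B))); rewrite ler_nat ltnW.
Qed.

Lemma frequently_ge (R : archiRealFieldType) (P : nat -> Prop) (B : R) :
  frequently P -> exists2 Q : nat, B <= Q%:R & P Q.
Proof.
by move=> freqP; have [m hm] := nat_ge_eventually B; have [Q /hm] := freqP m; exists Q.
Qed.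

Lemma size_poly_le_of_bounded (R : archiRealFieldType) (A : {poly R}) D :
  frequently (fun Q => `|A.[Q%:R]| <= Q%:R ^+ D) -> (size A <= D.+1)%N.
Proof.
move=> bounded; rewrite leqNgt; apply/negP => lt_DA.
have [|B hB] := @poly_norm_lt_eventually _ 'X^D A; first by rewrite size_polyXn.
have [Q /hB] := frequently_ge B bounded.
by rewrite hornerXn ger0_norm ?exprn_ge0 // => /lt_le_trans/[apply]; rewrite ltxx.
Qed.

Lemma dvdp_of_int_valued (R S : {poly rat}) :
  frequently (fun Q => R.[Q%:R] != 0 /\ S.[Q%:R] / R.[Q%:R] \is a Num.int) ->
  R %| S.
Proof.
move=> int_valued; rewrite /dvdp; apply: contraT => rem_neq0.
have [Q0 _ [RQ0_neq0 _]] := int_valued 0%N.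
have R_neq0 : R != 0 by apply: contraNneq RQ0_neq0 => ->; rewrite horner0.
have [A [c c_neq0 defA]] := rat_poly_scale (S %/ R).
have c'_neq0 : (c%:~R : rat) != 0 by rewrite intr_eq0.
have [|B1 hB1] := @poly_norm_lt_eventually _ (c%:~R *: (S %% R)) R.
  by rewrite size_scale // ltn_modp.
have [|B2 hB2] := @poly_norm_lt_eventually _ 0 (S %% R).
  by rewrite size_poly0 size_poly_gt0.
have [Q B_le_Q [RQ_neq0 int_SR]] := frequently_ge (Num.max B1 B2) int_valued.
move: B_le_Q; rewrite ge_max => /andP[/hB1 lt1 /hB2 lt2].
(* with [r := S %% R], [c r(Q) / R(Q)] is an integer of absolute value < 1 *)
pose z := c%:~R * (S.[Q%:R] / R.[Q%:R]) - (A.[Q%:Z])%:~R.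
have ez : z = c%:~R * (S %% R).[Q%:R] / R.[Q%:R].
  rewrite /z {1}(divp_eq S R) hornerD hornerM defA hornerZ -horner_map /=.
  by field; rewrite RQ_neq0 c'_neq0.
have z_int : z \is a Num.int by rewrite /z rpredB ?(rpredM _ int_SR) ?intr_int.
have z_lt1 : `|z| < 1.
  by rewrite ez normrM normrV ?unitfE // ltr_pdivrMr ?normr_gt0 // mul1r -hornerZ.
have z_eq0 : z = 0.
  by apply/eqP; apply: contraTT z_lt1 => z_neq0; rewrite -leNgt norm_intr_ge1.
move: ez lt2; rewrite z_eq0 horner0 normr0 => /esym/eqP.
rewrite !mulf_eq0 invr_eq0 (negPf c'_neq0) (negPf RQ_neq0) orbF => /eqP ->.
by rewrite normr0 ltxx.
Qed.

Definition recip (K : fieldType) (e : nat) (p : {poly K}) := \poly_(i < e.+1) p`_(e - i).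

Lemma horner_recip (K : fieldType) e (p : {poly K}) x :
  (size p <= e.+1)%N -> x != 0 -> (recip e p).[x] = x ^+ e * p.[x^-1].
Proof.
move=> le_pe x_neq0; rewrite horner_poly (horner_coef_wide _ le_pe) mulr_sumr.
rewrite (reindex_inj rev_ord_inj); apply: eq_bigr => i _ /=.
have le_ie : (i <= e)%N by rewrite -ltnS.
by rewrite subSS subKn // exprVn (expfB_cond _ (m := e)) ?(negPf x_neq0) // mulrCA.
Qed.

Lemma recip_mul_eq (R : realFieldType) e D (P S A : {poly R}) :
  (size P <= e.+1)%N -> (size S <= e.+1)%N -> (size A <= D.+1)%N ->
  'X^D * recip e P = A * recip e S -> P = recip D A * S.
Proof.
move=> le_Pe le_Se le_AD eqXP; apply: (@poly_eq_eventually _ _ _ 1) => y le1y.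
have y_neq0 : y != 0 by rewrite gt_eqF // (lt_le_trans ltr01).
have yV_neq0 : y^-1 != 0 by rewrite invr_eq0.
have /(congr1 (horner^~ y^-1)) := eqXP.
rewrite !hornerM hornerXn !horner_recip // invrK.
move=> eq_at_yV; have c_neq0 : y^-1 ^+ D * y^-1 ^+ e != 0.
  by rewrite mulf_neq0 ?expf_neq0.
apply: (mulfI c_neq0); rewrite -mulrA eq_at_yV !exprVn.
by field; rewrite !expf_neq0.
Qed.

Lemma dvdp_of_scaled_nat_values (P R : {poly rat}) D :
  frequently (fun Q => R.[Q%:R^-1] != 0 /\
    exists2 N : nat, (N <= Q ^ D)%N & P.[Q%:R^-1] / R.[Q%:R^-1] * Q%:R ^+ D = N%:R) ->
  R %| P.
Proof.
move=> values; pose e := maxn (size P) (size R).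
have le_Pe : (size P <= e.+1)%N by rewrite /e; lia.
have le_Re : (size R <= e.+1)%N by rewrite /e; lia.
pose XP := 'X^D * recip e P; pose R' := recip e R.
have recip_values Q : (0 < Q)%N -> R.[Q%:R^-1] != 0 ->
    R'.[Q%:R] != 0 /\ P.[Q%:R^-1] / R.[Q%:R^-1] * Q%:R ^+ D = XP.[Q%:R] / R'.[Q%:R].
  move=> Q_gt0 RQ_neq0; have Q_neq0 : (Q%:R : rat) != 0 by rewrite pnatr_eq0 -lt0n.
  rewrite /XP /R' hornerM hornerXn !horner_recip //.
  by split; [rewrite mulf_neq0 ?expf_neq0 | field; rewrite RQ_neq0 expf_neq0].
have /divpK defXP : R' %| XP.
  apply: dvdp_of_int_valued; apply: frequentlyS values => Q Q_gt0 [RQ_neq0 [N _ eqN]].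
  have [R'Q_neq0 <-] := recip_values Q Q_gt0 RQ_neq0.
  by split; rewrite // eqN rpred_nat.
pose A := XP %/ R'.
have A_values : frequently (fun Q => `|A.[Q%:R]| <= Q%:R ^+ D).
  apply: frequentlyS values => Q Q_gt0 [RQ_neq0 [N le_ND eqN]].
  have [R'Q_neq0] := recip_values Q Q_gt0 RQ_neq0.
  rewrite -defXP hornerM mulfK // eqN => <-.
  by rewrite normr_nat -natrX ler_nat.
rewrite (recip_mul_eq le_Pe le_Re (size_poly_le_of_bounded A_values) (esym defXP)).
exact: dvdp_mull.
Qed.

Theorem lemma7p15 (k l : nat) (M : 'M[nat]_(k, l))
  (a : 'I_k -> nat) (b : 'I_l -> nat) (T T' : tableau) (P R : {poly rat}) :
  (forall i : 'I_k, a i = \sum_(j < l) M i j)%N ->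
  (forall j : 'I_l, b j = \sum_(i < k) M i j)%N ->
  semistandard k T -> semistandard l T' -> tshape T = tshape T' ->
  has_content T a -> has_content T' b ->
  (forall F : finFieldType,
      let q : rat := ((#|F|%N)%:R)^-1 in
      R.[q] != 0 /\ pM F M a b T T' = P.[q] / R.[q]) ->
  (R %| P)%R.
Proof.
(* only the integrality of [Q^(n²) p_M] is used, not the tableau hypotheses *)
move=> rowsumM _ _ _ _ _ _ pM_rat.
apply: (@dvdp_of_scaled_nat_values _ _ ((\sum_(i < k) a i) * (\sum_(i < k) a i))) => m.
have [p lt_mp p_prime] := prime_above m; exists p => //.
pose Fp := FinRing.Field.clone 'F_p _.
have cardFp : #|Fp| = p by exact: card_Fp.
have [RQ_neq0 eq_pM] := pM_rat Fp; rewrite /= cardFp in RQ_neq0 eq_pM.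
split=> //; have [N le_N eqN] := @pM_scaled_nat Fp _ _ _ _ b T T' rowsumM.
by exists N; [rewrite -cardFp | rewrite -eq_pM -cardFp].
Qed.
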